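(* Let $\mathcal P=\mathcal P(V,R)$ be a binary quadratic operad over a field $\Bbbk$ with $V\neq0$. Then the dendriform splitting operad $\mathrm{pre}\,\mathcal P=\mathrm{preLie}\bullet\mathcal P$ does not satisfy the Dong Property.
   Context: A binary quadratic operad $\mathcal P(V,R)$ is generated by a finite-dimensional $S_2$-module $V$ of binary operations with relations $R\subseteq\mathcal F_V(3)$ ($\mathcal F_V$ the free operad). $\mathrm{preLie}$ is the operad of pre-Lie (left-symmetric) algebras and $\bullet$ denotes the Manin black product of binary quadratic operads (Ginzburg–Kapranov). Formal distributions and the Dong Property: for an algebra $A$ with a family of bilinear operations closed under the $S_2$-action, a formal distribution over $A$ is $a(z)=\sum_{s\in\mathbb Z}a(s)z^{-s-1}$, $a(s)\in A$. Distributions $a,b$ are local if for every operation $*$ there is $N\ge0$ with $(w-z)^N a(w)*b(z)=0$ in $A[[z^{\pm1},w^{\pm1}]]$. For $n\in\mathbb Z_+$ the $n$-product is $(a\,{*}_{(n)}\,b)(w)=\mathrm{Res}_{\xi=0}(\xi-w)^n a(\xi)*b(w)$. An operad satisfies the Dong Property if for every algebra $A$ over it and every three pairwise local distributions $a,b,c$ over $A$, $(a\,{*}_{(n)}\,b)$ and $c$ are local for all $n\in\mathbb Z_+$ and all operations $*$. *)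

From HB Require Import structures.
From mathcomp Require Import all_boot all_order all_algebra.
Set Implicit Arguments. Unset Strict Implicit. Unset Printing Implicit Defensive.
Import GRing.Theory.
Local Open Scope ring_scope.

(* V is given with a basis indexed by the finite type [gen]; the S_2-action
   (12) on V is the matrix [tau] : e_i . (12) = sum_j tau i j e_j.
   F_V(3) is identified with three copies of V (x) V, one for each tree shape
     shape 0 : mu(nu(x1,x2),x3),  shape 1 : mu(nu(x2,x3),x1),
     shape 2 : mu(nu(x3,x1),x2);
   an element r : tree3 gen K has coefficient r s i j on the tree of shape s
   with outer operation e_i and inner operation e_j.  (Every tree in F_V(3)
   is uniquely written this way using the S_2-action.) *)
Definition tree3 (I : finType) (K : fieldType) := 'I_3 -> I -> I -> K.

Record bqop (K : fieldType) := BQOp {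
  gen : finType;
  tau : gen -> gen -> K;
  rel : tree3 gen K -> Prop }.
Arguments gen {K} b.
Arguments tau {K} b _ _.
Arguments rel {K} b _.

Section Trees.
Variables (K : fieldType) (I : finType) (t : I -> I -> K).

Definition t3add (r r' : tree3 I K) : tree3 I K := fun s i j => r s i j + r' s i j.
Definition t3scale (k : K) (r : tree3 I K) : tree3 I K := fun s i j => k * r s i j.
Definition t3zero : tree3 I K := fun _ _ _ => 0.

(* action of the 3-cycle x1 -> x2 -> x3 -> x1 *)
Definition t3cyc (r : tree3 I K) : tree3 I K := fun s =>
  match val s with 0%N => r (inord 2) | 1%N => r (inord 0) | _ => r (inord 1) end.
(* action of the transposition x1 <-> x2 *)
Definition t3swap (r : tree3 I K) : tree3 I K := fun s i k =>
  let s' := match val s with 0%N => inord 0 | 1%N => inord 2 | _ => inord 1 end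
            : 'I_3 in
  \sum_j r s' i j * t j k.
End Trees.

Definition is_bqop (K : fieldType) (P : bqop K) : Prop :=
  (forall i k : gen P, \sum_j tau P i j * tau P j k = (i == k)%:R) /\
  rel P (@t3zero K (gen P)) /\
  (forall r r', rel P r -> rel P r' -> rel P (t3add r r')) /\
  (forall k r, rel P r -> rel P (t3scale k r)) /\
  (forall r, rel P r -> rel P (t3cyc r)) /\
  (forall r, rel P r -> rel P (t3swap (tau P) r)).

(* V = K[S_2], basis e_0 : (x,y) |-> x y,  e_1 = e_0.(12) : (x,y) |-> y x *)
Definition preLie_tau (K : fieldType) (i j : 'I_2) : K := (i != j)%:R.
(* the left-symmetry relator
   (x1x2)x3 - x1(x2x3) - (x2x1)x3 + x2(x1x3) *)
Definition preLie_relator (K : fieldType) : tree3 'I_2 K := fun s i j =>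
  match val s, val i, val j with
  | 0%N, 0%N, 0%N => 1
  | 0%N, 0%N, 1%N => -1
  | 1%N, 1%N, 0%N => -1
  | 2%N, 1%N, 1%N => 1
  | _, _, _ => 0
  end.
(* a spanning set of the S_3-submodule generated by the relator *)
Definition preLie_rel (K : fieldType) (r : tree3 'I_2 K) : Prop :=
  exists (k : 'I_3) (b : bool),
    r = (if b then @t3swap K _ (@preLie_tau K) else id)
          (iter k (@t3cyc K _) (@preLie_relator K)).
Definition preLie (K : fieldType) : bqop K :=
  @BQOp K 'I_2 (@preLie_tau K) (@preLie_rel K).

(* P . Q = F(V_P (x) V_Q (x) sgn) / (Phi(R_P (x) R_Q)), Phi shape-wise. *)
Definition black_phi (K : fieldType) (I J : finType) (r : tree3 I K)
  (q : tree3 J K) : tree3 (I * J)%type K :=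
  fun s ip jq => r s ip.1 jq.1 * q s ip.2 jq.2.
Definition black (K : fieldType) (P Q : bqop K) : bqop K :=
  @BQOp K (gen P * gen Q)%type
    (fun ip jq => - (tau P ip.1 jq.1 * tau Q ip.2 jq.2))
    (fun t => exists r q, rel P r /\ rel Q q /\ t = black_phi r q).

Definition preOp (K : fieldType) (P : bqop K) : bqop K := black (preLie K) P.

Section Algebras.
Variables (K : fieldType) (I : finType) (A : lmodType K).
Variable m : I -> A -> A -> A.

Definition bilin (f : A -> A -> A) : Prop :=
  (forall (k : K) x y z, f (k *: x + y) z = k *: f x z + f y z) /\
  (forall (k : K) x y z, f z (k *: x + y) = k *: f z x + f z y).

Definition tree_eval (r : tree3 I K) (x1 x2 x3 : A) : A :=
  \sum_i \sum_j (r (inord 0) i j *: m i (m j x1 x2) x3 +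
                 r (inord 1) i j *: m i (m j x2 x3) x1 +
                 r (inord 2) i j *: m i (m j x3 x1) x2).

Definition opv (v : I -> K) (a b : A) : A := \sum_i v i *: m i a b.

(* formal distributions a(z) = sum_s a(s) z^{-s-1}, represented by s |-> a(s) *)
(* (w-z)^N a(w) * b(z) = 0, coefficientwise *)
Definition local (a b : int -> A) : Prop :=
  forall v : I -> K, exists N : nat, forall s u : int,
    \sum_(k < N.+1) (((-1) ^+ k * ('C(N, k))%:R) *:
       opv v (a (s + Posz (N - k)%N)) (b (u + Posz k))) = 0.

Definition nprod (v : I -> K) (n : nat) (a b : int -> A) : int -> A :=
  fun u => \sum_(k < n.+1) (((-1) ^+ k * ('C(n, k))%:R) *:
       opv v (a (Posz (n - k)%N)) (b (u + Posz k))).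
End Algebras.

Definition is_algebra (K : fieldType) (P : bqop K) (A : lmodType K)
  (m : gen P -> A -> A -> A) : Prop :=
  (forall i, bilin (m i)) /\
  (forall i a b, m i b a = \sum_j tau P i j *: m j a b) /\
  (forall r, rel P r -> forall x1 x2 x3, tree_eval m r x1 x2 x3 = 0).

Definition Dong_property (K : fieldType) (P : bqop K) : Prop :=
  forall (A : lmodType K) (m : gen P -> A -> A -> A), @is_algebra K P A m ->
  forall a b c : int -> A, local m a b -> local m b c -> local m a c ->
  forall (v : gen P -> K) (n : nat), local m (nprod m v n a b) c.

From mathcomp Require Import all_boot all_order all_algebra.
From mathcomp Require Import ring.
Set Implicit Arguments. Unset Strict Implicit. Unset Printing Implicit Defensive.
Import GRing.Theory.
Local Open Scope ring_scope.

(* The S_2-action tau on V is an involution, so it has an eigenvector l with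
   eigenvalue e, e^2 = 1.  For an algebra (A, .) with z.(x.y) = 0 and
   (y.x).z = -e (x.y).z, the operations x >_p y = l_p x.y, x <_p y = -e l_p y.x
   make A a pre P-algebra: compositions with outer operation <_q vanish, those
   with outer >_q equal l_q l_p (x.y).z whichever the inner operation is, and
   in every pre-Lie relation the coefficients of the trees with outer
   operation e_0 sum to zero over the inner operation.
   In a five-dimensional such algebra take x1, x2, x3 with x3 annihilating x1
   and x2 on both sides but (x1.x2).x3 <> 0.  The distributions a = x1, b = x2
   (constant) and c(z) = x3 z^-1 are pairwise local, while a >_(0) b is the
   constant x1 > x2, and (x1 > x2) > x3 <> 0 makes it non-local with c. *)

Lemma involution_eigenvector (K : fieldType) (G : finType) (t : G -> G -> K)
    (p0 : G) :
  (forall i k, \sum_j t i j * t j k = (i == k)%:R) ->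
  exists (e : K) (l : G -> K),
    [/\ e * e = 1, exists p, l p != 0 & forall p, \sum_q t p q * l q = e * l p].
Proof.
move=> t_inv.
have t_col p : \sum_q t p q * (q == p0)%:R = t p p0.
  rewrite (bigD1 p0) //= eqxx mulr1 big1 ?addr0 // => q /negbTE ->.
  by rewrite mulr0.
(* t (t + 1) = 1 + t, so a nonzero column of t + 1 has eigenvalue 1; if the
   column p0 of t + 1 vanishes, e_p0 has eigenvalue -1. *)
have [/existsP[p lp]|] := boolP [exists p, t p p0 + (p == p0)%:R != 0].
  exists 1, (fun q => t q p0 + (q == p0)%:R).
  split; [exact: mulr1 | by exists p |].
  move=> q; under eq_bigr do rewrite mulrDr.
  by rewrite big_split /= t_inv t_col mul1r addrC.
rewrite negb_exists => /forallP t_col0.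
exists (-1), (fun q => (q == p0)%:R); split; [by rewrite mulrNN mulr1| |].
  by exists p0; rewrite eqxx oner_neq0.
move=> p; rewrite t_col mulN1r; apply/eqP; rewrite -addr_eq0.
exact/negPn/t_col0.
Qed.

Section Bilinear.
Variables (K : fieldType) (A : lmodType K) (f : A -> A -> A).
Hypothesis f_bilin : bilin f.

Lemma bilin0l x : f 0 x = 0.
Proof.
have := f_bilin.1 1 0 0 x.
by rewrite !scale1r addr0 => /esym/eqP; rewrite -subr_eq0 addrK => /eqP.
Qed.

Lemma bilin0r x : f x 0 = 0.
Proof.
have := f_bilin.2 1 0 0 x.
by rewrite !scale1r addr0 => /esym/eqP; rewrite -subr_eq0 addrK => /eqP.
Qed.

Lemma bilinZl k x y : f (k *: x) y = k *: f x y.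
Proof. by have := f_bilin.1 k x 0 y; rewrite !addr0 bilin0l addr0. Qed.

Lemma bilinZr k x y : f x (k *: y) = k *: f x y.
Proof. by have := f_bilin.2 k y 0 x; rewrite !addr0 bilin0r addr0. Qed.

End Bilinear.

Section Locality.
Variables (K : fieldType) (I : finType) (A : lmodType K) (m : I -> A -> A -> A).

Lemma opv_delta (i0 : I) x y : opv m (fun i => (i == i0)%:R) x y = m i0 x y.
Proof.
rewrite /opv (bigD1 i0) //= eqxx scale1r big1 ?addr0 // => i /negbTE ->.
by rewrite scale0r.
Qed.

Lemma local_const (x y : A) : local m (fun=> x) (fun=> y).
Proof.
move=> v; exists 1%N => s u; rewrite !big_ord_recr big_ord0 /= add0r.
by rewrite expr0 expr1 bin0 binn mul1r mulr1 scale1r scaleN1r subrr.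
Qed.

Lemma local_of_annihilate (a b : int -> A) :
  (forall i s u, m i (a s) (b u) = 0) -> local m a b.
Proof.
move=> ab0 v; exists 0%N => s u; rewrite big_ord1 /opv big1 ?scaler0 // => i _.
by rewrite ab0 scaler0.
Qed.

Lemma tree_eval_factor (w : I -> I -> K) (F : A -> A -> A -> A) :
  (forall i j x y z, m i (m j x y) z = w i j *: F x y z) ->
  forall r x1 x2 x3, tree_eval m r x1 x2 x3 =
    (\sum_i \sum_j r (inord 0) i j * w i j) *: F x1 x2 x3 +
    (\sum_i \sum_j r (inord 1) i j * w i j) *: F x2 x3 x1 +
    (\sum_i \sum_j r (inord 2) i j * w i j) *: F x3 x1 x2.
Proof.
move=> mmE r x1 x2 x3; rewrite !scaler_suml -!big_split; apply: eq_bigr => i _.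
rewrite !scaler_suml -!big_split; apply: eq_bigr => j _.
by rewrite !mmE !scalerA.
Qed.

End Locality.

Lemma not_Dong_of_witness (K : fieldType) (Q : bqop K) (A : lmodType K)
    (m : gen Q -> A -> A -> A) (v : gen Q -> K) (x1 x2 x3 : A) :
  is_algebra m -> (forall i, m i x1 x3 = 0) -> (forall i, m i x2 x3 = 0) ->
  opv m v (opv m v x1 x2) x3 != 0 -> ~ Dong_property Q.
Proof.
move=> m_alg x1x3 x2x3 /eqP x12x3 Dong; have [m_bilin _] := m_alg.
pose c (t : int) : A := if t == 0 then x3 else 0.
have c_local x : (forall i, m i x x3 = 0) -> local m (fun=> x) c.
  move=> xx3; apply: local_of_annihilate => i s u; rewrite /c.
  by case: ifP => _; [exact: xx3 | exact: bilin0r].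
have [N abc] := Dong A m m_alg (fun=> x1) (fun=> x2) c (local_const m x1 x2)
  (c_local _ x2x3) (c_local _ x1x3) v 0%N v.
have ab_const u : nprod m v 0 (fun=> x1) (fun=> x2) u = opv m v x1 x2.
  by rewrite /nprod big_ord1 expr0 bin0 mul1r scale1r.
apply: x12x3; have := abc 0 0; rewrite big_ord_recl big1 ?addr0 => [|k _].
  by rewrite ab_const /c eqxx expr0 bin0 mul1r scale1r.
by rewrite /c /= /opv big1 ?scaler0 // => i _; rewrite bilin0r ?scaler0.
Qed.

Lemma preLie_rel_outer0_sum (K : fieldType) (r : tree3 'I_2 K) :
  preLie_rel r -> forall s, \sum_j r s ord0 j = 0.
Proof.
move=> [[[|[|[|k]]] k_lt] [b ->]] [[|[|[|s]]] s_lt] //=; case: b;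
  rewrite /t3swap /t3cyc /preLie_relator /= ?inordK //=.
all: rewrite ?big_ord_recr ?big_ord0 /= /preLie_tau /=; ring.
Qed.

Section PreAlgebra.
Variables (K : fieldType) (P : bqop K) (e : K) (l : gen P -> K).
Hypothesis e_sqr : e * e = 1.
Hypothesis l_eigen : forall p, \sum_q tau P p q * l q = e * l p.
Variables (A : lmodType K) (mu : A -> A -> A).
Hypothesis mu_bilin : bilin mu.
Hypothesis mu_nilr : forall x y z, mu z (mu x y) = 0.
Hypothesis mu_skewl : forall x y z, mu (mu y x) z = - e *: mu (mu x y) z.

Definition pre_mul (i : gen (preOp P)) (x y : A) : A :=
  if i.1 == ord0 then l i.2 *: mu x y else (- e * l i.2) *: mu y x.

Lemma pre_mul_bilin i : bilin (pre_mul i).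
Proof.
have [mu_linl mu_linr] := mu_bilin.
by split=> k x y z; rewrite /pre_mul; case: ifP => _;
  rewrite ?mu_linl ?mu_linr scalerDr !scalerA mulrC.
Qed.

Lemma pre_mul_eq0 i x y : mu x y = 0 -> mu y x = 0 -> pre_mul i x y = 0.
Proof.
by move=> xy yx; rewrite /pre_mul; case: ifP => _; rewrite ?xy ?yx scaler0.
Qed.

Lemma pre_mul_comp i j x y z :
  pre_mul i (pre_mul j x y) z =
    ((i.1 == ord0)%:R * (l i.2 * l j.2)) *: mu (mu x y) z.
Proof.
rewrite /pre_mul; case: ifP => _; last first.
  by case: ifP => _; rewrite bilinZr // mu_nilr !scaler0 mul0r scale0r.
case: ifP => _; rewrite bilinZl // !scalerA mul1r //.
rewrite mu_skewl scalerA; congr (_ *: _).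
by transitivity (l i.2 * l j.2 * (e * e)); [ring | rewrite e_sqr mulr1].
Qed.

Lemma pre_mul_sym i x y :
  pre_mul i y x = \sum_j tau (preOp P) i j *: pre_mul j x y.
Proof.
case: i => i1 p; rewrite -(pair_bigA _ (fun j1 q =>
  tau (preOp P) (i1, p) (j1, q) *: pre_mul (j1, q) x y)).
rewrite big_ord_recr big_ord1 /= /pre_mul /preLie_tau /=.
under eq_bigr do rewrite scalerA.
under [X in _ + X]eq_bigr do rewrite scalerA.
rewrite -!scaler_suml.
have sum0 (f : gen P -> K) : \sum_q - (0 * tau P p q) * f q = 0.
  by rewrite big1 // => q _; rewrite mul0r oppr0 mul0r.
case: i1 => -[|[|//]] ? /=; rewrite sum0 scale0r ?add0r ?addr0; congr (_ *: _).
  rewrite (eq_bigr (fun q => e * (tau P p q * l q))) => [|q _]; last by ring.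
  by rewrite -mulr_sumr l_eigen mulrA e_sqr mul1r.
rewrite (eq_bigr (fun q => - (tau P p q * l q))) => [|q _]; last by ring.
by rewrite sumrN l_eigen mulNr.
Qed.

Lemma pre_mul_rel (r : tree3 'I_2 K) (q : tree3 (gen P) K) x1 x2 x3 :
  preLie_rel r -> tree_eval pre_mul (black_phi r q) x1 x2 x3 = 0.
Proof.
move=> r_rel; rewrite (tree_eval_factor (w := fun i j => (i.1 == ord0)%:R *
  (l i.2 * l j.2)) (F := fun x y z => mu (mu x y) z)) => [|i j x y z]; last first.
  exact: pre_mul_comp.
suff coef0 s : \sum_i \sum_j black_phi r q s i j *
    ((i.1 == ord0)%:R * (l i.2 * l j.2)) = 0.
  by rewrite !coef0 !scale0r !addr0.
rewrite big1 // => -[i1 p] _ /=; case: eqP => [->|_]; last first.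
  by rewrite big1 // => j _; rewrite mul0r mulr0.
rewrite -(pair_bigA _ (fun j1 j2 => black_phi r q s (ord0, p) (j1, j2) *
  (true%:R * (l p * l j2)))) /=.
under eq_bigr do under eq_bigr do rewrite /black_phi /= -mulrA.
by rewrite -big_distrlr /= preLie_rel_outer0_sum // mul0r.
Qed.

Lemma pre_mul_algebra : is_algebra pre_mul.
Proof.
split; [exact: pre_mul_bilin | split; [exact: pre_mul_sym |]].
by move=> _ [r [q [r_rel [_ ->]]]] x1 x2 x3; exact: pre_mul_rel.
Qed.

End PreAlgebra.

Local Notation o k := (@Ordinal 5 k isT).

Section NilpotentModel.
Variables (K : fieldType) (e : K).
Local Notation f k := (delta_mx 0 (o k) : 'rV[K]_5).

Definition model_mul (x y : 'rV[K]_5) : 'rV[K]_5 :=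
  \row_j (if j == o 3 then x 0 (o 0) * y 0 (o 1) - e * (x 0 (o 1) * y 0 (o 0))
          else if j == o 4 then x 0 (o 3) * y 0 (o 2) else 0).

Lemma model_mul_bilin : bilin model_mul.
Proof.
by split=> k x y z; apply/rowP => j; rewrite !mxE;
  do 2?case: ifP => _; ring.
Qed.

Lemma model_mul_nilr x y z : model_mul z (model_mul x y) = 0.
Proof. by apply/rowP => j; rewrite !mxE /=; do 2?case: ifP => _; ring. Qed.

Lemma model_mul_skewl : e * e = 1 -> forall x y z,
  model_mul (model_mul y x) z = - e *: model_mul (model_mul x y) z.
Proof.
move=> e_sqr x y z; apply/rowP => j; rewrite !mxE /=.
do 2?case: ifP => _; try ring.
set r := RHS; transitivity (r + x 0 (o 1) * y 0 (o 0) * z 0 (o 2) * (1 - e * e)).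
  by rewrite /r; ring.
by rewrite e_sqr subrr mulr0 addr0.
Qed.

Lemma model_mul_f2l x : model_mul (f 2) x = 0.
Proof. by apply/rowP => j; rewrite !mxE /=; do 2?case: ifP => _; ring. Qed.

Lemma model_mul_f2r (x : 'rV[K]_5) : x 0 (o 3) = 0 -> model_mul x (f 2) = 0.
Proof.
by move=> x3; apply/rowP => j; rewrite !mxE /= x3; do 2?case: ifP => _; ring.
Qed.

Lemma model_mul_f012 : model_mul (model_mul (f 0) (f 1)) (f 2) = f 4.
Proof.
by apply/rowP => -[[|[|[|[|[|//]]]]] ?]; rewrite !mxE /=; ring.
Qed.

End NilpotentModel.

Theorem mainTheorem2 (K : fieldType) (P : bqop K) :
  is_bqop P -> (0 < #|gen P|)%N -> ~ Dong_property (preOp P).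
Proof.
move=> [tau_inv _] /card_gt0P[p0 _].
have [e [l [e_sqr [p lp_neq0] l_eigen]]] := involution_eigenvector p0 tau_inv.
have mu_bilin := @model_mul_bilin K e.
have mu_nilr := @model_mul_nilr K e.
have mu_skewl := model_mul_skewl e_sqr.
have m_alg := pre_mul_algebra e_sqr l_eigen mu_bilin mu_nilr mu_skewl.
set m := pre_mul e l (model_mul e) in m_alg.
have f2_annihilate (x : 'rV[K]_5) :
    x 0 (o 3) = 0 -> forall i, m i x (delta_mx 0 (o 2)) = 0.
  move=> x3 i; apply: pre_mul_eq0; [exact: model_mul_f2r | exact: model_mul_f2l].
apply: (@not_Dong_of_witness _ _ _ m (fun i => (i == (ord0, p))%:R)
  (delta_mx 0 (o 0)) (delta_mx 0 (o 1)) (delta_mx 0 (o 2)) m_alg).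
- by apply: f2_annihilate; rewrite mxE.
- by apply: f2_annihilate; rewrite mxE.
rewrite !opv_delta /m (pre_mul_comp _ e_sqr mu_bilin mu_nilr mu_skewl).
rewrite model_mul_f012 /= mul1r scaler_eq0 negb_or mulf_neq0 //=.
by apply/negP => /eqP/rowP/(_ (o 4)); rewrite !mxE /= => /eqP; rewrite oner_eq0.
Qed.
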